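(* For every integer $n\ge0$ and every real $x$, $$x\,\mathfrak{C}_n'(x)=\sum_{k=0}^{n-1}\binom nk\mathfrak{C}_k(x)\,\mathfrak{C}_{n-k}(x).$$
   Context: For $n\ge1$ the central factorial is $x^{[n]}=x\,(x+\tfrac n2-1)(x+\tfrac n2-2)\cdots(x-\tfrac n2+1)$ (a product of $n$ factors), and $x^{[0]}=1$. The central factorial numbers of the second kind $T(n,k)$ ($0\le k\le n$) are defined by $x^n=\sum_{k=0}^n T(n,k)\,x^{[k]}$; equivalently $T(n,k)=\frac1{k!}\sum_{j=0}^k(-1)^j\binom kj\left(\frac k2-j\right)^n$, and $T(n,k)=0$ for $k>n$. The $n$th central Fubini-like polynomial is $\mathfrak{C}_n(x)=\sum_{k=0}^n k!\,T(n,k)\,x^k$. *)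

From HB Require Import structures.
From mathcomp Require Import all_boot all_order all_algebra.
Set Implicit Arguments. Unset Strict Implicit. Unset Printing Implicit Defensive.
Import Order.TTheory GRing.Theory Num.Theory.
Local Open Scope ring_scope.

(* Central factorial numbers of the second kind, via the explicit formula
   T(n,k) = 1/k! * sum_{j=0}^k (-1)^j C(k,j) (k/2 - j)^n. *)
Definition cfT (R : realFieldType) (n k : nat) : R :=
  (k`!%:R)^-1 *
  \sum_(j < k.+1) (-1) ^+ j * ('C(k, j))%:R * ((k%:R / 2%:R - j%:R) ^+ n).

Definition cfub (R : realFieldType) (n : nat) : {poly R} :=
  \sum_(k < n.+1) ((k`!%:R * cfT R n k) *: 'X^k).

(* The coefficient of x^k in C_n(x) is a(n,k) = k! T(n,k), the k-th finite
   difference of l |-> (k/2 - l)^n.  As (i+j)/2 - (l+l') = (i/2 - l) + (j/2 - l'),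
   the binomial theorem yields the convolution
     sum_k C(n,k) a(k,i) a(n-k,j) = a(n,i+j),
   and summing it over i + j = m shows that sum_{k<=n} C(n,k) C_k C_{n-k} has
   m-th coefficient (m+1) a(n,m), i.e. equals (x C_n)'.  The term k = n is C_n,
   since C_0 = 1, which leaves x C_n'.  Finally a(n,k) = 0 for k > n because a
   k-th difference kills polynomials of degree < k. *)

From HB Require Import structures.
From mathcomp Require Import all_boot all_order all_algebra.
From mathcomp Require Import ring.
Import Order.TTheory GRing.Theory Num.Theory.
Local Open Scope ring_scope.

Section FiniteDifference.
Variable R : comPzRingType.
Implicit Types (f : nat -> R) (k m : nat).

(* [fdiff k f m] is [(-1)^k] times the [k]-th forward difference of [f] at [m]. *)
Definition fdiff k f : nat -> R := iter k (fun g l => g l - g l.+1) f.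

Lemma fdiffD i j f : fdiff (i + j) f = fdiff i (fdiff j f).
Proof. exact: iterD. Qed.

Lemma fdiffS k f m : fdiff k.+1 f m = fdiff k f m - fdiff k f m.+1.
Proof. by []. Qed.

Lemma eq_fdiff k f g m : f =1 g -> fdiff k f m = fdiff k g m.
Proof. by move=> eq_fg; elim: k m => [|k IHk] m; rewrite ?fdiffS ?IHk. Qed.

Lemma fdiffSr k f : fdiff k.+1 f = fdiff k (fun l => f l - f l.+1).
Proof. exact: iterSr. Qed.

Lemma fdiffE k f m :
  fdiff k f m = \sum_(l < k.+1) (-1) ^+ l * 'C(k, l)%:R * f (l + m)%N.
Proof.
elim: k m => [|k IHk] m; first by rewrite big_ord1 expr0 !mul1r.
rewrite fdiffS !IHk big_ord_recl [in RHS]big_ord_recl /=.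
rewrite !bin0 !mulr1 !mul1r -addrA; congr (_ + _); symmetry.
under eq_bigr => l _ do rewrite /bump /= add1n binS natrD mulrDr mulrDl.
rewrite big_split /=; congr (_ + _).
  rewrite big_ord_recr /= bin_small // mulr0 mul0r addr0.
  by apply: eq_bigr => l _; rewrite /bump /= add1n.
rewrite -sumrN; apply: eq_bigr => l _.
by rewrite addSnnS exprS !mulN1r !mulNr.
Qed.

Lemma fdiff_binomial (c d : R) i j n :
  \sum_(k < n.+1) 'C(n, k)%:R * fdiff i (fun l => (c - l%:R) ^+ k) 0
                             * fdiff j (fun l => (d - l%:R) ^+ (n - k)) 0
  = fdiff (j + i) (fun l => (c + d - l%:R) ^+ n) 0.
Proof.
have binomial_split l l' : (c + d - (l + l')%:R) ^+ n =
    \sum_(k < n.+1) 'C(n, k)%:R * (c - l%:R) ^+ k * (d - l'%:R) ^+ (n - k).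
  have -> : c + d - (l + l')%:R = (d - l'%:R) + (c - l%:R) by rewrite natrD; ring.
  by rewrite exprDn; apply: eq_bigr => k _; rewrite -mulr_natl; ring.
rewrite fdiffD [fdiff j _ _]fdiffE.
under eq_bigr => k _ do
  rewrite mulrAC !fdiffE -mulrA mulr_suml mulr_sumr.
rewrite exchange_big /=.
apply: eq_bigr => l' _; rewrite fdiffE mulr_sumr.
under eq_bigr => k _ do rewrite !mulr_sumr.
rewrite exchange_big /=.
apply: eq_bigr => l _; rewrite !addn0 binomial_split !mulr_sumr.
by apply: eq_bigr => k _; ring.
Qed.

End FiniteDifference.

Arguments fdiff {R} k f.

Section FiniteDifferencePoly.
Variable R : idomainType.
Implicit Types p : {poly R}.

Lemma size_sub_comp_XaddC1 p : (size (p - (p \Po ('X + 1)))%R <= (size p).-1)%N.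
Proof.
have sizeX1 : size ('X + 1 : {poly R}) = 2 by rewrite -polyC1 size_XaddC.
have size_comp : size (p \Po ('X + 1)) = size p by rewrite size_comp_poly2.
have lead_comp : lead_coef (p \Po ('X + 1)) = lead_coef p.
  by rewrite lead_coef_comp ?sizeX1 // -polyC1 lead_coefXaddC expr1n mulr1.
apply/leq_sizeP => j; rewrite leq_eqVlt => /predU1P[<- | lt_j].
  by rewrite coefB -{2}size_comp -!lead_coefE lead_comp subrr.
have le_j : (size p <= j)%N by move: lt_j; case: (size p).
by rewrite coefB !nth_default ?subrr ?size_comp.
Qed.

Lemma fdiff_poly_eq0 p k m :
  (size p <= k)%N -> fdiff k (fun l => p.[l%:R]) m = 0.
Proof.
elim: k p => [|k IHk] p size_p.
  by move: size_p; rewrite size_poly_leq0 => /eqP->; exact: horner0.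
rewrite fdiffSr (@eq_fdiff _ _ _ (fun l => (p - (p \Po ('X + 1))).[l%:R])).
  apply: IHk; apply: leq_trans (size_sub_comp_XaddC1 p) _.
  by rewrite -ltnS; case: (size p) size_p.
by move=> l; rewrite hornerD hornerN horner_comp hornerD hornerX hornerC -natr1.
Qed.

End FiniteDifferencePoly.

Section CentralFactorial.
Variable F : fieldType.

Definition fcfT n k : F := fdiff k (fun l => (k%:R / 2%:R - l%:R) ^+ n) 0.

Lemma fcfT_binomial n i j :
  \sum_(k < n.+1) 'C(n, k)%:R * fcfT k i * fcfT (n - k) j = fcfT n (i + j).
Proof. by rewrite /fcfT fdiff_binomial addnC natrD mulrDl. Qed.

Lemma fcfT_eq0 n k : (n < k)%N -> fcfT n k = 0.
Proof.
move=> lt_nk; rewrite /fcfT.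
rewrite (@eq_fdiff _ _ _ (fun l => (((k%:R / 2%:R)%:P - 'X) ^+ n).[l%:R])).
  apply: fdiff_poly_eq0; apply: leq_trans (size_poly_exp_leq _ _) _.
  by rewrite -opprB size_polyN size_XsubC mul1n.
by move=> l; rewrite horner_exp hornerD hornerN hornerC hornerX.
Qed.

Lemma fcfT0n k : fcfT 0 k = (k == 0)%:R.
Proof.
case: k => [|k]; first by rewrite /fcfT /= expr0.
rewrite /fcfT (@eq_fdiff _ _ _ (fun l => (1 : {poly F}).[l%:R])).
  by apply: fdiff_poly_eq0; rewrite size_poly1.
by move=> l; rewrite hornerC expr0.
Qed.

End CentralFactorial.

Section CentralFubini.
Variable R : realFieldType.

Lemma fact_cfT n k : k`!%:R * cfT R n k = fcfT R n k.
Proof.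
rewrite /cfT mulrA mulfV ?mul1r ?pnatr_eq0 -?lt0n ?fact_gt0 // /fcfT fdiffE.
by apply: eq_bigr => l _; rewrite addn0.
Qed.

Lemma coef_cfub n m : (cfub R n)`_m = fcfT R n m.
Proof.
have -> : cfub R n = \poly_(k < n.+1) fcfT R n k.
  by rewrite poly_def; apply: eq_bigr => k _; rewrite fact_cfT.
by rewrite coef_poly; case: ltnP => // le_nm; rewrite fcfT_eq0.
Qed.

Lemma cfub0 : cfub R 0 = 1.
Proof. by apply/polyP => m; rewrite coef_cfub fcfT0n coefC; case: m. Qed.

Lemma coef_cfubM i j m :
  (cfub R i * cfub R j)`_m = \sum_(l < m.+1) fcfT R i l * fcfT R j (m - l).
Proof. by rewrite coefM; apply: eq_bigr => l _; congr (_ * _); apply: coef_cfub. Qed.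

Lemma cfub_binomial n :
  \sum_(k < n.+1) 'C(n, k)%:R *: (cfub R k * cfub R (n - k)) = ('X * cfub R n)^`().
Proof.
apply/polyP => m; rewrite coef_sum coef_deriv coefXM /= coef_cfub.
under eq_bigr => k _ do rewrite coefZ coef_cfubM mulr_sumr.
have -> : fcfT R n m *+ m.+1 = \sum_(l < m.+1) fcfT R n m.
  by rewrite sumr_const card_ord.
rewrite exchange_big /=; apply: eq_bigr => -[l /= lt_lm] _.
rewrite -[m in RHS](subnKC (ltnSE lt_lm)) -fcfT_binomial.
by apply: eq_bigr => k _; rewrite mulrA.
Qed.

Lemma mulX_deriv_cfub n :
  'X * (cfub R n)^`() = \sum_(k < n) 'C(n, k)%:R *: (cfub R k * cfub R (n - k)).
Proof.
have := cfub_binomial n.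
rewrite big_ord_recr /= subnn cfub0 mulr1 binn scale1r derivM derivX mul1r.
by rewrite [RHS]addrC => /addIr.
Qed.

End CentralFubini.

Theorem corollary6 (R : realFieldType) (n : nat) (x : R) :
  x * ((cfub R n)^`()).[x] =
  \sum_(k < n) ('C(n, k))%:R * (cfub R k).[x] * (cfub R (n - k)).[x].
Proof.
rewrite -[x in x * _]hornerX -hornerM mulX_deriv_cfub horner_sum.
by apply: eq_bigr => k _; rewrite hornerZ hornerM mulrA.
Qed.
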